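(* Let $G=(V,E)$ be a finite, simple, connected graph with $\kappa(x,y)\geq K>0$ for all $x\sim y$, and suppose $\operatorname{diam}_{\operatorname{eff}}(G)=\frac{\max_v\operatorname{Deg}(v)}{K}$. Let $x\in V$. Then \[ \Delta d(x,\cdot)=\operatorname{Deg}(x)-K\,d(x,\cdot). \] Moreover, $\operatorname{Deg}(v)=\max_w\operatorname{Deg}(w)$ for all $v\in V$, and $\kappa(u,v)=K$ for all edges $u\sim v$.
   Context: $d$ is the combinatorial distance, $\operatorname{Deg}$ the degree, $\operatorname{diam}_{\operatorname{eff}}(G)=\frac{1}{|V|^2}\sum_{x,y}d(x,y)$. Laplacian $\Delta f(x)=\sum_{y\sim x}(f(y)-f(x))$. Ollivier curvature of an edge: $\kappa(x,y)=\inf\{\Delta f(x)-\Delta f(y): f(y)-f(x)=1,\ \max_{u\sim v}|f(u)-f(v)|=1\}$. *)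

From mathcomp Require Import all_boot all_order all_algebra.
From mathcomp Require Import boolp classical_sets reals.
Set Implicit Arguments. Unset Strict Implicit. Unset Printing Implicit Defensive.
Import Order.TTheory GRing.Theory Num.Theory.
Local Open Scope ring_scope.

Section Graph.
Variables (T : finType) (e : rel T).

Definition simple_graph : Prop := symmetric e /\ irreflexive e.
Definition connected_graph : Prop := forall x y : T, connect e x y.

Fixpoint ball (x : T) (n : nat) : {set T} :=
  if n is n'.+1 then
    ball x n' :|: [set v | [exists u in ball x n', e u v]]
  else [set x].

(* combinatorial distance: least n with y in ball x n
   (any path length < #|T| suffices in a connected graph) *)
Definition dist (x y : T) : nat :=
  find (fun n => y \in ball x n) (iota 0 #|T|).

Definition Deg (v : T) : nat := #|[set w | e v w]|.
Definition maxDeg : nat := \max_(v : T) Deg v.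

Variable R : realType.

Definition diam_eff : R :=
  (#|T| ^ 2)%:R^-1 * \sum_(x : T) \sum_(y : T) (dist x y)%:R.

Definition Laplacian (f : T -> R) (x : T) : R :=
  \sum_(y : T | e x y) (f y - f x).

Definition edge_lip (f : T -> R) : R :=
  \big[Num.max/0]_(p : T * T | e p.1 p.2) `|f p.1 - f p.2|.

(* Ollivier curvature of an edge (limit-free formulation) *)
Definition ollivier (x y : T) : R :=
  inf [set Laplacian f x - Laplacian f y |
        f in [set f : T -> R | f y - f x = 1 /\ edge_lip f = 1]].

End Graph.

From mathcomp Require Import all_boot all_order all_algebra.
From mathcomp Require Import boolp classical_sets reals.
From mathcomp Require Import lra.
Import Order.TTheory GRing.Theory Num.Theory.
Local Open Scope ring_scope.
Set Implicit Arguments. Unset Strict Implicit.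

(* Along a geodesic from x to v, the function d(x,.) is an admissible test
   function for the curvature of every edge, so the curvature bound telescopes
   to Delta d(x,.)(v) <= Deg x - K d(x,v) <= maxDeg - K d(x,v).  Summed over all
   pairs (x, v), the left-hand sides vanish because the Laplacian has total sum
   zero, and the right-hand sides vanish exactly when the effective diameter is
   maxDeg / K.  Hence all these inequalities are equalities; at v = x this says
   Deg x = maxDeg, and testing the curvature of an edge u ~ v against d(u,.)
   gives kappa(u,v) <= K. *)

Lemma ler_sum2_eq (R : numDomainType) (I J : finType) (F G : I -> J -> R) :
  (forall i j, F i j <= G i j) ->
  \sum_i \sum_j F i j = \sum_i \sum_j G i j -> forall i j, F i j = G i j.
Proof.
move=> F_le /eqP; rewrite (leif_sum (fun i _ => leif_sum (fun j _ => leif_eq (F_le i j)))).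
by move=> /forallP F_eq i j; move: (F_eq i) => /forallP/(_ j)/eqP.
Qed.

Section Distance.
Variables (T : finType) (e : rel T).
Hypothesis connT : connected_graph e.

Lemma ball_subset x m n : (m <= n)%N -> ball e x m \subset ball e x n.
Proof.
elim: n => [|n IHn]; first by rewrite leqn0 => /eqP ->.
rewrite leq_eqVlt => /orP[/eqP -> //|]; rewrite ltnS => /IHn sub_mn.
by apply/fintype.subsetP => z /(fintype.subsetP sub_mn) z_n; rewrite /= inE z_n.
Qed.

Lemma ball_path x p : path e x p -> last x p \in ball e x (size p).
Proof.
elim/last_ind: p => [|p z IHp]; first by rewrite /= set11.
rewrite rcons_path last_rcons size_rcons => /andP[/IHp p_in e_pz] /=.
by rewrite inE; apply/orP; right; rewrite inE; apply/existsP; exists (last x p); rewrite p_in.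
Qed.

Lemma mem_ball_card x y : y \in ball e x #|T|.-1.
Proof.
have [p ep ->] := connectP (connT x y).
have [q eq uq _] := shortenP ep.
have size_q : (size q <= #|T|.-1)%N.
  by have := max_card (mem (x :: q)); rewrite (card_uniqP uq); case: #|T|.
exact: fintype.subsetP (ball_subset x size_q) _ (ball_path eq).
Qed.

Lemma mem_ball x y m : (y \in ball e x m) = (dist e x y <= m)%N.
Proof.
have has_ball : has (fun n => y \in ball e x n) (iota 0 #|T|).
  apply/hasP; exists #|T|.-1; last exact: mem_ball_card.
  by rewrite mem_iota add0n ltn_predL; apply/card_gt0P; exists x.
have dist_lt : (dist e x y < #|T|)%N by rewrite -[#|T|](size_iota 0) -has_find.
have y_dist : y \in ball e x (dist e x y).
  by have := nth_find 0 has_ball; rewrite nth_iota.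
apply/idP/idP => [y_m|m_ge]; last exact: fintype.subsetP (ball_subset x m_ge) _ y_dist.
rewrite leqNgt; apply/negP => m_lt.
by have := before_find 0 m_lt; rewrite nth_iota ?add0n ?y_m // (ltn_trans m_lt).
Qed.

Lemma dist_eq0 x y : (dist e x y == 0%N) = (y == x).
Proof. by rewrite -leqn0 -mem_ball inE. Qed.

Lemma distxx x : dist e x x = 0%N.
Proof. by apply/eqP; rewrite dist_eq0. Qed.

Lemma dist_edge_le x u v : e u v -> (dist e x v <= (dist e x u).+1)%N.
Proof.
move=> e_uv; rewrite -mem_ball inE; apply/orP; right; rewrite inE.
by apply/existsP; exists u; rewrite e_uv mem_ball leqnn.
Qed.

Lemma dist_geodesic_pred x v n :
  dist e x v = n.+1 -> exists2 u, e u v & dist e x u = n.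
Proof.
move=> dist_v; have : v \in ball e x n.+1 by rewrite mem_ball dist_v.
rewrite inE mem_ball dist_v ltnn /= inE => /existsP[u /andP[u_n e_uv]].
exists u => //; apply/eqP; rewrite eqn_leq -mem_ball u_n -ltnS -dist_v.
exact: dist_edge_le.
Qed.

Lemma dist_adj x y : irreflexive e -> e x y -> dist e x y = 1%N.
Proof.
move=> irr_e e_xy; have := dist_edge_le x e_xy; rewrite distxx.
have : dist e x y != 0%N by rewrite dist_eq0; apply: contraTneq e_xy => ->; rewrite irr_e.
by case: (dist e x y) => [|[|]].
Qed.

End Distance.

Section Curvature.
Variables (T : finType) (e : rel T) (R : realType).
Implicit Types (f : T -> R).

Lemma le_edge_lip f u v : e u v -> `|f u - f v| <= edge_lip e f.
Proof. by move=> e_uv; rewrite /edge_lip (bigD1 (u, v)) //= le_max lexx. Qed.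

Lemma edge_lip_le f c :
  0 <= c -> (forall u v, e u v -> `|f u - f v| <= c) -> edge_lip e f <= c.
Proof.
move=> c_ge0 f_lip; rewrite /edge_lip; elim/big_ind: _ => // [a b|[u v] /=].
  by rewrite ge_max => -> ->.
exact: f_lip.
Qed.

Lemma normr_Laplacian_le f v :
  `|Laplacian e f v| <= (Deg e v)%:R * edge_lip e f.
Proof.
rewrite /Laplacian (le_trans (ler_norm_sum _ _ _)) //.
under eq_bigr do rewrite distrC.
rewrite (le_trans (ler_sum _ (fun y e_vy => le_edge_lip f (e_vy : e v y)))) //.
by rewrite (eq_bigl (mem [set w | e v w])) => [|y]; rewrite ?sumr_const ?mulr_natl ?inE.
Qed.

Lemma sum_Laplacian f : symmetric e -> \sum_v Laplacian e f v = 0.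
Proof.
move=> sym_e; pose S := \sum_v \sum_y (if e v y then f y - f v else 0).
have -> : \sum_v Laplacian e f v = S by apply: eq_bigr => v _; rewrite /Laplacian big_mkcond.
suff S_opp : S = - S by apply/eqP; rewrite -[S == 0]orFb -(mulrn_eq0 S 2) mulr2n {1}S_opp addNr.
rewrite {1}/S exchange_big -sumrN; apply: eq_bigr => y _.
rewrite -sumrN; apply: eq_bigr => v _; rewrite sym_e.
by case: (e y v); rewrite ?oppr0 // opprB.
Qed.

Lemma ollivier_le u v f : f v - f u = 1 -> edge_lip e f = 1 ->
  ollivier e R u v <= Laplacian e f u - Laplacian e f v.
Proof.
move=> f_uv f_lip; apply: ge_inf; last by exists f.
exists (- ((Deg e u)%:R + (Deg e v)%:R)) => _ [g [_ g_lip] <-].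
move: (normr_Laplacian_le g u) (normr_Laplacian_le g v).
by rewrite g_lip !mulr1 => /ler_normlP[? ?] /ler_normlP[? ?]; lra.
Qed.

Hypotheses (sym_e : symmetric e) (irr_e : irreflexive e) (connT : connected_graph e).

Local Notation distR x := (fun w => (dist e x w)%:R : R).

Lemma dist_lipschitz x a b : e a b -> `|distR x a - distR x b| <= 1.
Proof.
move=> e_ab; have ab := dist_edge_le connT x e_ab.
have ba : (dist e x a <= (dist e x b).+1)%N by apply: dist_edge_le; rewrite // sym_e.
move: ab ba; rewrite -!(ler_nat R) -!natr1 => ab ba.
by apply/ler_normlP; split; lra.
Qed.

Lemma edge_lip_dist x u v :
  e u v -> dist e x v = (dist e x u).+1 -> edge_lip e (distR x) = 1.
Proof.
move=> e_uv dist_uv; apply: le_anti; rewrite edge_lip_le ?ler01 //=; last exact: dist_lipschitz.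
by have := le_edge_lip (distR x) e_uv; rewrite dist_uv -natr1 opprD addrA subrr sub0r normrN normr1.
Qed.

Lemma Laplacian_dist_center x : Laplacian e (distR x) x = (Deg e x)%:R.
Proof.
rewrite /Laplacian.
under eq_bigr => y e_xy do rewrite (dist_adj connT irr_e e_xy) distxx // subr0.
by rewrite (eq_bigl (mem [set w | e x w])) => [|y]; rewrite ?sumr_const ?inE.
Qed.

Lemma Laplacian_dist_le K x v :
  (forall u w, e u w -> K <= ollivier e R u w) ->
  Laplacian e (distR x) v <= (Deg e x)%:R - K * (dist e x v)%:R.
Proof.
move=> K_le; rewrite -Laplacian_dist_center.
move Hn : (dist e x v) => n; elim: n v Hn => [|n IHn] v dist_v.
  by move/eqP: dist_v; rewrite dist_eq0 // => /eqP ->; rewrite mulr0 subr0.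
have [u e_uv dist_u] := dist_geodesic_pred connT dist_v.
have step : K <= Laplacian e (distR x) u - Laplacian e (distR x) v.
  apply: le_trans (K_le _ _ e_uv) (ollivier_le _ _).
    by rewrite dist_v dist_u -natr1 addrAC subrr add0r.
  by apply: (edge_lip_dist e_uv); rewrite dist_u dist_v.
by have := IHn u dist_u; rewrite -natr1 mulrDr mulr1; lra.
Qed.

Lemma ollivier_le_Laplacian_dist u v : e u v ->
  ollivier e R u v <= Laplacian e (distR u) u - Laplacian e (distR u) v.
Proof.
move=> e_uv; have dist_uv := dist_adj connT irr_e e_uv.
apply: ollivier_le; first by rewrite dist_uv distxx // subr0.
by apply: (edge_lip_dist e_uv); rewrite dist_uv distxx.
Qed.

End Curvature.

Theorem lemma3p2 (R : realType) (T : finType) (e : rel T) (K : R) :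
  simple_graph e -> connected_graph e ->
  0 < K ->
  (forall u v : T, e u v -> K <= ollivier e R u v) ->
  diam_eff e R = (maxDeg e)%:R / K ->
  forall x : T,
    ((forall v : T,
        Laplacian e (fun w => ((dist e x w)%:R : R)) v
        = (Deg e x)%:R - K * (dist e x v)%:R)
     /\ (forall v : T, Deg e v = maxDeg e)
     /\ (forall u v : T, e u v -> ollivier e R u v = K)).
Proof.
move=> [sym_e irr_e] connT K_gt0 K_le diamE x.
set D : R := (maxDeg e)%:R.
pose L a b := Laplacian e (fun w => ((dist e a w)%:R : R)) b.
have L_le a b : L a b <= D - K * (dist e a b)%:R.
  by rewrite (le_trans (Laplacian_dist_le sym_e irr_e connT a b K_le)) // lerD2r ler_nat leq_bigmax.
have sum_bound : \sum_a \sum_b (D - K * (dist e a b)%:R) = 0.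
  have T_gt0 : (0 < #|T|)%N by apply/card_gt0P; exists x.
  have N2_neq0 : (#|T| ^ 2)%:R != 0 :> R by rewrite pnatr_eq0 -lt0n expn_gt0 T_gt0.
  under eq_bigr do rewrite sumrB sumr_const -mulr_sumr.
  rewrite sumrB sumr_const -mulr_sumr.
  have -> : \sum_a \sum_b ((dist e a b)%:R : R) = (#|T| ^ 2)%:R * (D / K).
    by rewrite -diamE /diam_eff mulVKf.
  by rewrite mulrCA [K * _]mulrC divfK ?gt_eqF // -mulrnA -[D *+ _]mulr_natl mulnn subrr.
have L_eq : forall a b, L a b = D - K * (dist e a b)%:R.
  by apply: ler_sum2_eq L_le _; rewrite sum_bound big1 // => a _; apply: sum_Laplacian.
have Deg_max v : ((Deg e v)%:R : R) = D.
  by have := L_eq v v; rewrite /L Laplacian_dist_center // distxx // mulr0 subr0.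
split; first by move=> v; rewrite Deg_max -L_eq.
split; first by move=> v; apply/eqP; rewrite -(eqr_nat R) Deg_max.
move=> u v e_uv; apply: le_anti; rewrite K_le // andbT.
have := ollivier_le_Laplacian_dist R sym_e irr_e connT e_uv.
by rewrite -/(L u u) -/(L u v) !L_eq distxx // dist_adj // mulr0 mulr1 subr0 opprB addrC subrK.
Qed.
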